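(* Let $n\ge0$. For every Schröder path $\gamma$ of semi-length $n$, in the poset $\mathcal{S}_n$ we have $|\Delta\gamma|=\omega_H(\gamma)+\omega_{DU}(\gamma)$ and $|\nabla\gamma|=\omega^*_H(\gamma)+\omega_{UD}(\gamma)$. For every Grand Schröder path $\gamma$ of semi-length $n$, in the poset $\mathcal{GS}_n$ we have $|\Delta\gamma|=\omega_H(\gamma)+\omega_{DU}(\gamma)$ and $|\nabla\gamma|=\omega_H(\gamma)+\omega_{UD}(\gamma)$.
   Context: Steps: $U=(1,1)$, $D=(1,-1)$, $H=(2,0)$. A Grand Schröder path of semi-length $n$ is a lattice path from $(0,0)$ to $(2n,0)$ with steps $U,D,H$; a Schröder path is a Grand Schröder path never going below the $x$-axis. $\mathcal{S}_n$ (resp. $\mathcal{GS}_n$) is the set of Schröder (resp. Grand Schröder) paths of semi-length $n$, partially ordered by $\gamma_1\le\gamma_2$ iff $\gamma_1$ lies weakly below $\gamma_2$. $\Delta x$ is the set of elements covering $x$ and $\nabla x$ the set of elements covered by $x$. Paths are identified with words of steps; $\omega_\alpha(\gamma)$ is the number of occurrences of the word $\alpha$ as a factor of $\gamma$; $\omega^*_H(\gamma)$ is the number of $H$ steps of $\gamma$ not lying on the $x$-axis. *)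

From HB Require Import structures.
From mathcomp Require Import all_boot all_order all_algebra.
Set Implicit Arguments. Unset Strict Implicit. Unset Printing Implicit Defensive.
Import GRing.Theory Num.Theory.
Local Open Scope ring_scope.

(* Steps: U = (1,1), D = (1,-1), H = (2,0). *)
Inductive step := U | D | H.

Definition step_eqb (a b : step) : bool :=
  match a, b with U, U | D, D | H, H => true | _, _ => false end.
Lemma step_eqP : Equality.axiom step_eqb.
Proof. by case; case; constructor. Qed.
HB.instance Definition _ := hasDecEq.Build step step_eqP.

Definition spath := seq step.

Definition width (w : spath) : nat :=
  sumn [seq (match s with H => 2 | _ => 1 end) | s <- w].

Fixpoint hend (w : spath) : int :=
  match w with
  | [::] => 0
  | U :: w' => 1 + hend w'
  | D :: w' => -1 + hend w'
  | H :: w' => hend w'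
  end.

(* height of the spath w at the integer abscissa x (0 <= x <= width w);
   the path is piecewise linear with breakpoints at integer abscissae
   (the midpoint of an H step is at the same height as its ends). *)
Fixpoint hgt (w : spath) (x : nat) : int :=
  match w with
  | [::] => 0
  | s :: w' =>
      match s with
      | U => if x == 0%N then 0 else 1 + hgt w' x.-1
      | D => if x == 0%N then 0 else -1 + hgt w' x.-1
      | H => if (x <= 1)%N then 0 else hgt w' (x - 2)
      end
  end.

(* Grand Schröder spath of semi-length n: from (0,0) to (2n,0). *)
Definition grand (n : nat) (w : spath) : bool :=
  (width w == 2 * n)%N && (hend w == 0).

Definition schroder (n : nat) (w : spath) : bool :=
  grand n w && all (fun i => 0 <= hend (take i w)) (iota 0 (size w).+1).

Fixpoint words (k : nat) : seq spath :=
  match k with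
  | 0 => [:: [::]]
  | k'.+1 =>
      [seq U :: w | w <- words k'] ++ [seq D :: w | w <- words k'] ++
      match k' with 0 => [::] | k''.+1 => [seq H :: w | w <- words k''] end
  end.

Definition GSn (n : nat) : seq spath := undup [seq w <- words (2 * n) | grand n w].
Definition Sn (n : nat) : seq spath := undup [seq w <- words (2 * n) | schroder n w].

Definition below (n : nat) (w1 w2 : spath) : bool :=
  all (fun x => hgt w1 x <= hgt w2 x) (iota 0 (2 * n).+1).
Definition sbelow (n : nat) (w1 w2 : spath) : bool := below n w1 w2 && (w1 != w2).

Definition covers (n : nat) (P : seq spath) (x y : spath) : bool :=
  sbelow n x y && ~~ has (fun z => sbelow n x z && sbelow n z y) P.

Definition Delta (n : nat) (P : seq spath) (x : spath) : seq spath :=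
  [seq y <- P | covers n P x y].
Definition Nabla (n : nat) (P : seq spath) (x : spath) : seq spath :=
  [seq y <- P | covers n P y x].

Definition omega (a w : spath) : nat :=
  count (fun i => prefix a (drop i w)) (iota 0 (size w).+1).

Definition omegaHstar (w : spath) : nat :=
  count (fun i => (nth U w i == H) && (hend (take i w) != 0)) (iota 0 (size w)).

From HB Require Import structures.
From mathcomp Require Import all_boot all_order all_algebra.
From mathcomp Require Import zify ring.
Set Implicit Arguments. Unset Strict Implicit. Unset Printing Implicit Defensive.
Import GRing.Theory Num.Theory.
Local Open Scope ring_scope.

(* A path is read as its sequence of unit moves (U and D are one unit move,
   H is two flat ones), so that its height function [hgt] is a partial sum.
   Two geometric facts about the order "lies weakly below" carry the proof:
   - a path is determined by its heights (hgt_inj);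
   - an elementary raise (a factor H replaced by UD, or DU by H) increases
     the height at exactly one abscissa (raise_hgt), and if x lies strictly
     below y with the same end points, some elementary raise of x still lies
     below y (raise_towards).
   Hence in any family of Grand Schröder paths closed under elementary raises,
   y covers x iff y is an elementary raise of x (covers_iff_raise); GS_n and
   S_n are such families.  Counting covers then amounts to counting rewriting
   sites: the list of all rewrites of a path at its H- and DU-sites (resp. its
   UD- and H-sites) is duplicate-free and has the expected length
   (size_rewrites).  In S_n an H step on the x-axis cannot be lowered to DU,
   which is why omega*_H replaces omega_H there. *)

Inductive move := MUp | MDown | MFlat1 | MFlat2.

Definition move_eqb (a b : move) : bool :=
  match a, b with
  | MUp, MUp | MDown, MDown | MFlat1, MFlat1 | MFlat2, MFlat2 => true
  | _, _ => false
  end.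
Lemma move_eqP : Equality.axiom move_eqb.
Proof. by case; case; constructor. Qed.
HB.instance Definition _ := hasDecEq.Build move move_eqP.

Definition rise (m : move) : int :=
  match m with MUp => 1 | MDown => -1 | _ => 0 end.

Definition moves_of (s : step) : seq move :=
  match s with U => [:: MUp] | D => [:: MDown] | H => [:: MFlat1; MFlat2] end.

Fixpoint moves (w : spath) : seq move :=
  if w is s :: w' then moves_of s ++ moves w' else [::].

Definition partial_height (ms : seq move) (t : nat) : int :=
  \sum_(m <- take t ms) rise m.

Definition slope (s : step) : int := match s with U => 1 | D => -1 | H => 0 end.

Lemma moves_cat a b : moves (a ++ b) = moves a ++ moves b.
Proof. by elim: a => //= s a ->; rewrite catA. Qed.

Lemma width_cons s w : width (s :: w) = (size (moves_of s) + width w)%N.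
Proof. by case: s. Qed.

Lemma width_cat a b : width (a ++ b) = (width a + width b)%N.
Proof. by rewrite /width map_cat sumn_cat. Qed.

Lemma size_moves w : size (moves w) = width w.
Proof. by elim: w => //= s w IH; rewrite size_cat IH width_cons. Qed.

Lemma hend_cons s w : hend (s :: w) = slope s + hend w.
Proof. by case: s => //=; rewrite add0r. Qed.

Lemma partial_height0 ms : partial_height ms 0 = 0.
Proof. by rewrite /partial_height take0 big_nil. Qed.

Lemma partial_height_cons m ms t :
  partial_height (m :: ms) t.+1 = rise m + partial_height ms t.
Proof. by rewrite /partial_height /= big_cons. Qed.

Lemma partial_height_cat a b t :
  partial_height (a ++ b) t = partial_height a t + partial_height b (t - size a).
Proof.
rewrite /partial_height take_cat; case: ltnP => Ht; last by rewrite big_cat (take_oversize Ht).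
by rewrite (_ : t - size a = 0)%N ?take0 ?big_nil ?addr0 //; lia.
Qed.

Lemma partial_height_end ms t :
  (size ms <= t)%N -> partial_height ms t = \sum_(m <- ms) rise m.
Proof. by move=> Ht; rewrite /partial_height take_oversize. Qed.

Lemma partial_heightS ms t :
  partial_height ms t.+1 = partial_height ms t + rise (nth MFlat2 ms t).
Proof.
case: (ltnP t (size ms)) => Ht.
  by rewrite /partial_height (take_nth MFlat2 Ht) -cats1 big_cat big_seq1.
by rewrite !partial_height_end ?nth_default ?addr0 //; lia.
Qed.

Lemma hgt_moves w t : hgt w t = partial_height (moves w) t.
Proof.
elim: w t => [|s w IH] t; first by rewrite /partial_height /=; case: t; rewrite big_nil.
case: s => /=.
- by case: t => [|t]; rewrite ?partial_height0 // partial_height_cons IH.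
- by case: t => [|t]; rewrite ?partial_height0 // partial_height_cons IH.
- case: t => [|[|t]]; rewrite ?partial_height0 //=.
    by rewrite partial_height_cons partial_height0 addr0.
  by rewrite !partial_height_cons IH subn2 !add0r.
Qed.

Lemma hend_moves w : hend w = \sum_(m <- moves w) rise m.
Proof.
elim: w => [|s w IH]; first by rewrite big_nil.
by rewrite hend_cons /= big_cat -IH; case: s; rewrite /= !big_cons big_nil ?addr0.
Qed.

Lemma hgt0 w : hgt w 0 = 0.
Proof. by rewrite hgt_moves partial_height0. Qed.

Lemma hgtS w t : hgt w t.+1 = hgt w t + rise (nth MFlat2 (moves w) t).
Proof. by rewrite !hgt_moves partial_heightS. Qed.

Lemma hgt_end w t : (width w <= t)%N -> hgt w t = hend w.
Proof. by move=> Ht; rewrite hgt_moves hend_moves partial_height_end ?size_moves. Qed.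

Lemma hgt_cat A r t : hgt (A ++ r) t = hgt A t + hgt r (t - width A).
Proof. by rewrite !hgt_moves moves_cat partial_height_cat size_moves. Qed.

Lemma hgt_prefix C r : hgt (C ++ r) (width C) = hend C.
Proof. by rewrite hgt_cat subnn hgt0 addr0 hgt_end. Qed.

Lemma hgt_after_prefix C s r : hgt (C ++ s :: r) (width C).+1 = hend C + slope s.
Proof.
rewrite hgt_cat hgt_end // subSn // subnn; congr (_ + _).
by case: s => /=; rewrite ?hgt0 ?addr0.
Qed.

Lemma rise_bounds m : -1 <= rise m <= 1.
Proof. by case: m. Qed.

Lemma width_eq0 w : width w = 0%N -> w = [::].
Proof. by case: w => // s w; rewrite width_cons; case: s. Qed.

Lemma first_difference (x y : spath) : x <> y -> width x = width y ->
  exists C s t x1 y1, [/\ s <> t, x = C ++ s :: x1 & y = C ++ t :: y1].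
Proof.
elim: x y => [|s x IH] [|t y] //; [by move=> _ /esym /width_eq0 | by move=> _ /width_eq0|].
case: (eqVneq s t) => [<-|st] Hne Hw; last by exists [::], s, t, x, y; split=> //; apply/eqP.
have Hne' : x <> y by move=> E; apply: Hne; rewrite E.
have Hw' : width x = width y by move: Hw; rewrite !width_cons => /addnI.
have [C [s' [t' [x1 [y1 [st' -> ->]]]]]] := IH y Hne' Hw'.
by exists (s :: C), s', t', x1, y1.
Qed.

Lemma slope_inj : injective slope.
Proof. by case; case. Qed.

Lemma hgt_inj x y : width x = width y ->
  (forall t, (t <= width x)%N -> hgt x t = hgt y t) -> x = y.
Proof.
move=> Hw Hh; apply/eqP/negPn/negP => /eqP Hne.
have [C [s [t [x1 [y1 [st Ex Ey]]]]]] := first_difference Hne Hw.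
have : hgt x (width C).+1 = hgt y (width C).+1.
  by apply: Hh; rewrite Ex width_cat width_cons; case: (s) => /=; lia.
by rewrite Ex Ey !hgt_after_prefix => /addrI /slope_inj.
Qed.

(* Elementary raises *)

Definition raise (x y : spath) : Prop :=
  (exists A B, x = A ++ H :: B /\ y = A ++ U :: D :: B) \/
  (exists A B, x = A ++ D :: U :: B /\ y = A ++ H :: B).

Definition bump (k t : nat) : int := if t == k then 1 else 0.

Lemma hgt_splice A p q B t :
  (forall k, hgt (p ++ B) k = hgt (q ++ B) k + bump 1 k) ->
  hgt (A ++ p ++ B) t = hgt (A ++ q ++ B) t + bump (width A).+1 t.
Proof.
move=> Epq; rewrite (hgt_cat A (p ++ B)) (hgt_cat A (q ++ B)) Epq addrA /bump.
suff -> : ((t - width A)%N == 1%N) = (t == (width A).+1) by [].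
by apply/eqP/eqP; lia.
Qed.

Lemma hgt_H_UD A B t :
  hgt (A ++ U :: D :: B) t = hgt (A ++ H :: B) t + bump (width A).+1 t.
Proof.
by apply (@hgt_splice A [:: U; D] [:: H] B t); case=> [|[|k]] /=; rewrite ?subn2 /=; ring.
Qed.

Lemma hgt_DU_H A B t :
  hgt (A ++ H :: B) t = hgt (A ++ D :: U :: B) t + bump (width A).+1 t.
Proof.
by apply (@hgt_splice A [:: H] [:: D; U] B t); case=> [|[|k]] /=; rewrite ?subn2 /=; ring.
Qed.

Lemma raise_hgt x y : raise x y -> exists k,
  [/\ (k.+1 < width x)%N, width y = width x & forall t, hgt y t = hgt x t + bump k.+1 t].
Proof.
case=> [[A [B [-> ->]]]|[A [B [-> ->]]]]; exists (width A);
  rewrite !width_cat !width_cons /=; (split; [lia | lia | move=> t]).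
- exact: hgt_H_UD.
- exact: hgt_DU_H.
Qed.

Lemma raise_neq x y : raise x y -> x != y.
Proof.
move=> /raise_hgt [k [_ _ Hh]]; apply/eqP => E.
by move: (Hh k.+1); rewrite -E /bump eqxx; lia.
Qed.

Lemma raise_hend x y : raise x y -> hend y = hend x.
Proof.
move=> /raise_hgt [k [Hk Hw Hh]].
by rewrite -(hgt_end (leqnn _)) Hh Hw /bump (hgt_end (leqnn _)) ifN ?addr0 //; lia.
Qed.

Definition raise_site (x : spath) (j : nat) : bool :=
  let ms := moves x in
  ((nth MFlat2 ms j == MDown) && (nth MFlat2 ms j.+1 == MUp)) || (nth MFlat2 ms j == MFlat1).

Lemma nth_moves_Flat1 x j : nth MFlat2 (moves x) j = MFlat1 ->
  exists A B, x = A ++ H :: B /\ width A = j.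
Proof.
elim: x j => [|s x IH] j /=; first by rewrite nth_nil.
case: s => /=.
- case: j => //= j /IH [A [B [-> <-]]]; by exists (U :: A), B.
- case: j => //= j /IH [A [B [-> <-]]]; by exists (D :: A), B.
- case: j => [|[|j]] //=; first by exists [::], x.
  move=> /IH [A [B [-> <-]]]; by exists (H :: A), B.
Qed.

Lemma nth_moves_DownUp x j :
  nth MFlat2 (moves x) j = MDown -> nth MFlat2 (moves x) j.+1 = MUp ->
  exists A B, x = A ++ D :: U :: B /\ width A = j.
Proof.
elim: x j => [|s x IH] j /=; first by rewrite nth_nil.
case: s => /=.
- case: j => //= j E1 E2; have [A [B [-> <-]]] := IH j E1 E2; by exists (U :: A), B.
- case: j => /= [_|j E1 E2]; first by case: x {IH} => [|[] x] //= _; exists [::], x.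
  have [A [B [-> <-]]] := IH j E1 E2; by exists (D :: A), B.
- case: j => [|[|j]] //= E1 E2; have [A [B [-> <-]]] := IH j E1 E2; by exists (H :: A), B.
Qed.

Lemma nth_moves_Down_next x k : nth MFlat2 (moves x) k = MDown ->
  (k.+1 < width x)%N -> nth MFlat2 (moves x) k.+1 != MFlat2.
Proof.
elim: x k => [|s x IH] k /=; first by rewrite nth_nil.
rewrite width_cons; case: s => /=.
- case: k => //= k E1 Hk; apply: IH => //; lia.
- case: k => /= [_|k E1 Hk]; first by case: x {IH} => [|[] x].
  apply: IH => //; lia.
- case: k => [|[|k]] //= E1 Hk; apply: IH => //; lia.
Qed.

Lemma raise_at_site x j : raise_site x j ->
  exists2 x', raise x x' & forall t, hgt x' t = hgt x t + bump j.+1 t.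
Proof.
case/orP => [/andP [/eqP E1 /eqP E2]|/eqP E1].
- have [A [B [Ex <-]]] := nth_moves_DownUp E1 E2.
  by exists (A ++ H :: B); [right; exists A, B | move=> t; rewrite Ex hgt_DU_H].
- have [A [B [Ex <-]]] := nth_moves_Flat1 E1.
  by exists (A ++ U :: D :: B); [left; exists A, B | move=> t; rewrite Ex hgt_H_UD].
Qed.

Definition wide_gap (x y : spath) (k : nat) : Prop :=
  2 <= hgt y k.+1 - hgt x k.+1 \/
  (hgt y k.+1 - hgt x k.+1 = 1 /\ nth MFlat2 (moves y) k.+1 = MFlat2).

Lemma raise_site_ahead x y k : width x = width y -> hend x = hend y ->
  nth MFlat2 (moves x) k = MDown -> wide_gap x y k ->
  exists2 j, raise_site x j & hgt x j.+1 < hgt y j.+1.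
Proof.
move=> Hw He; move Hm: (width x - k)%N => m.
elim: m k Hm => [|m IH] k Hm Hk Hg.
  by exfalso; rewrite /wide_gap !hgt_end ?He ?subrr in Hg; [case: Hg => [|[]] | lia | lia].
have Hlt : (k.+1 < width x)%N.
  rewrite ltnNge; apply/negP => Hle.
  by rewrite /wide_gap !hgt_end ?He ?subrr in Hg; [case: Hg => [|[]] | lia | lia].
have Hgap : hgt x k.+1 < hgt y k.+1 by case: Hg => [|[]]; lia.
have Hy := rise_bounds (nth MFlat2 (moves y) k.+1).
have := nth_moves_Down_next Hk Hlt.
case Ex: (nth MFlat2 (moves x) k.+1) => // _.
- by exists k => //; rewrite /raise_site Hk Ex.
- apply: (IH k.+1) => //; first lia.
  by left; rewrite !(hgtS _ k.+1) Ex /=; case: Hg => [|[Hg ->]] /=; lia.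
- exists k.+1; first by rewrite /raise_site Ex orbT.
  by rewrite !(hgtS _ k.+1) Ex /=; case: Hg => [|[Hg ->]] /=; lia.
Qed.

Lemma nth_moves_prefix C s r :
  nth MFlat2 (moves (C ++ s :: r)) (width C) = head MFlat2 (moves_of s).
Proof. by rewrite moves_cat nth_cat size_moves ltnn subnn; case: s. Qed.

Lemma raise_towards x y : width x = width y -> hend x = hend y ->
  (forall t, (t <= width x)%N -> hgt x t <= hgt y t) -> x <> y ->
  exists2 x', raise x x' & forall t, (t <= width x)%N -> hgt x' t <= hgt y t.
Proof.
move=> Hw He Hle Hne.
suff [j Sj Hj] : exists2 j, raise_site x j & hgt x j.+1 < hgt y j.+1.
  have [x' Rx Ex'] := raise_at_site Sj; exists x' => // t Ht.
  by rewrite Ex' /bump; case: eqP => [->|_]; [lia | rewrite addr0; apply: Hle].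
have [C [s [t [x1 [y1 [st Ex Ey]]]]]] := first_difference Hne Hw.
have HC : ((width C).+1 <= width x)%N by rewrite Ex width_cat width_cons; case: (s) => /=; lia.
have := Hle _ HC; rewrite {1}Ex {1}Ey !hgt_after_prefix lerD2l => Hst.
have Hx := nth_moves_prefix C s x1; rewrite -Ex in Hx.
case: s t st Hst Ex Ey Hx => [] [] //= _ Hst Ex Ey Hx.
- apply: (raise_site_ahead Hw He Hx); left.
  by rewrite {1}Ex {1}Ey !hgt_after_prefix /=; lia.
- apply: (raise_site_ahead Hw He Hx); right; split.
    by rewrite {1}Ex {1}Ey !hgt_after_prefix /=; lia.
  by rewrite Ey moves_cat nth_cat size_moves ltnNge leqnSn /= subSn // subnn.
- exists (width C); first by rewrite /raise_site Hx orbT.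
  by rewrite {1}Ex {1}Ey !hgt_after_prefix /=; lia.
Qed.

Lemma raise_between x y z : raise x y -> width z = width x ->
  (forall t, (t <= width x)%N -> hgt x t <= hgt z t) ->
  (forall t, (t <= width x)%N -> hgt z t <= hgt y t) -> z = x \/ z = y.
Proof.
move=> /raise_hgt [k [Hk Hw Hh]] Wz bxz bzy.
case: (boolP (hgt z k.+1 == hgt x k.+1)) => [/eqP E|E]; [left | right].
- apply: hgt_inj; first by [].
  move=> t Ht; case: (eqVneq t k.+1) => [->|ne]; first by rewrite E.
  have := bxz t ltac:(lia); have := bzy t ltac:(lia).
  by rewrite Hh /bump (negPf ne); lia.
- apply: hgt_inj; first by rewrite Wz.
  move=> t Ht; have := bxz t ltac:(lia); have := bzy t ltac:(lia).
  rewrite Hh /bump; case: (eqVneq t k.+1) => [->|ne]; last lia.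
  by move: E => /eqP; lia.
Qed.

(* Covers in families closed under raises *)

Lemma belowP n x y :
  reflect (forall t, (t <= 2 * n)%N -> hgt x t <= hgt y t) (below n x y).
Proof.
apply: (iffP allP) => Hb t.
- by move=> Ht; apply: Hb; rewrite mem_iota; lia.
- by rewrite mem_iota => Ht; apply: Hb; lia.
Qed.

Lemma grandP n x : reflect (width x = (2 * n)%N /\ hend x = 0) (grand n x).
Proof. by apply: (iffP andP) => [[/eqP -> /eqP ->]|[-> ->]]. Qed.

Lemma raise_grand n x y : raise x y -> grand n y = grand n x.
Proof.
move=> R; have [_ [_ Hw _]] := raise_hgt R.
by rewrite /grand Hw (raise_hend R).
Qed.

Lemma raise_sbelow n x y : raise x y -> sbelow n x y.
Proof.
move=> R; have [k [_ _ Hh]] := raise_hgt R.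
rewrite /sbelow raise_neq // andbT; apply/belowP => t _.
by rewrite Hh /bump; case: eqP => _; lia.
Qed.

Definition raise_closed (n : nat) (P : seq spath) : Prop :=
  (forall x, x \in P -> grand n x) /\ (forall x y, x \in P -> raise x y -> y \in P).

Lemma covers_iff_raise n P x y : raise_closed n P -> x \in P -> y \in P ->
  covers n P x y <-> raise x y.
Proof.
move=> [PG PR] xP yP; have [Wx Ex] := grandP _ _ (PG _ xP); have [Wy Ey] := grandP _ _ (PG _ yP).
split.
- move=> /andP [/andP [/belowP bxy nxy] nbetween].
  have [x' Rx' bx'y] : exists2 x', raise x x' &
      forall t, (t <= width x)%N -> hgt x' t <= hgt y t.
    apply: raise_towards; [lia | by rewrite Ex Ey | by rewrite Wx | exact/eqP].
  case: (eqVneq x' y) => [<- //|ne]; exfalso.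
  have x'y : sbelow n x' y.
    by rewrite /sbelow ne andbT; apply/belowP => t Ht; apply: bx'y; lia.
  by move/hasPn: nbetween => /(_ x' (PR _ _ xP Rx')); rewrite raise_sbelow // x'y.
- move=> R; apply/andP; split; first exact: raise_sbelow.
  apply/hasPn => z zP; apply/negP => /andP [/andP [/belowP bxz nxz] /andP [/belowP bzy nzy]].
  have [Wz _] := grandP _ _ (PG _ zP).
  have := raise_between R; rewrite Wx => /(_ z Wz bxz bzy) [] Ez.
  + by move: nxz; rewrite Ez eqxx.
  + by move: nzy; rewrite Ez eqxx.
Qed.

Lemma mem_consmap (s t : step) w (l : seq spath) :
  (s :: w \in [seq t :: v | v <- l]) = (s == t) && (w \in l).
Proof. by apply/mapP/andP => [[v vl [-> ->]]|[/eqP -> wl]]; [|exists w]. Qed.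

Lemma mem_nilmap (t : step) (l : seq spath) : ([::] \in [seq t :: v | v <- l]) = false.
Proof. by apply/mapP => [[v _]]. Qed.

Lemma mem_words k w : (w \in words k) = (width w == k).
Proof.
elim/ltn_ind: k w => [[|k]] IH w.
  by rewrite /= inE; case: w => [|s w] //; rewrite width_cons; case: s.
rewrite /= !mem_cat; case: w => [|s w].
  by rewrite !mem_nilmap /=; case: (k) => [|k'] //; rewrite mem_nilmap.
rewrite !mem_consmap width_cons; case: s => /=.
- by rewrite IH //; case: (k) => [|k'] //=; rewrite ?mem_consmap /= ?orbF.
- by rewrite IH //; case: (k) => [|k'] //=; rewrite ?mem_consmap /= ?orbF.
- by case: (k) IH => [|k'] IH //=; rewrite mem_consmap IH.
Qed.

Lemma mem_GSn n w : (w \in GSn n) = grand n w.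
Proof.
rewrite mem_undup mem_filter mem_words.
by apply/andP/idP => [[]//|G]; split => //; case/andP: G.
Qed.

Lemma mem_Sn n w : (w \in Sn n) = schroder n w.
Proof.
rewrite mem_undup mem_filter mem_words.
by apply/andP/idP => [[]//|G]; split => //; case/andP: G => /andP [].
Qed.

Lemma hgt_prefix_end w t : exists2 i, (i <= size w)%N & hgt w t = hend (take i w).
Proof.
elim: w t => [|s w IH] t; first by exists 0%N; rewrite //= hgt0.
case: t => [|t]; first by exists 0%N; rewrite ?hgt0 ?take0.
case: s => /=.
- by have [i Hi ->] := IH t; exists i.+1.
- by have [i Hi ->] := IH t; exists i.+1.
- case: t => [|t] /=; first by exists 0%N; rewrite ?take0.
  by rewrite subn2 /=; have [i Hi ->] := IH t; exists i.+1.
Qed.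

Lemma schroderP n w : reflect (grand n w /\ forall t, 0 <= hgt w t) (schroder n w).
Proof.
apply: (iffP andP) => [[G /allP N]|[G N]]; split=> //.
  move=> t; have [i Hi ->] := hgt_prefix_end w t; apply: N; rewrite mem_iota; lia.
apply/allP => i _; have := N (width (take i w)).
by rewrite -{1}(cat_take_drop i w) hgt_prefix.
Qed.

Lemma raise_closed_GSn n : raise_closed n (GSn n).
Proof.
split=> [x|x y]; rewrite ?mem_GSn // => G R.
by rewrite (raise_grand _ R).
Qed.

Lemma raise_closed_Sn n : raise_closed n (Sn n).
Proof.
split=> [x|x y]; rewrite !mem_Sn; first by case/schroderP.
move=> /schroderP [G N] R; apply/schroderP; split; first by rewrite (raise_grand _ R).
have [k [_ _ Hh]] := raise_hgt R.
by move=> t; rewrite Hh /bump; have := N t; case: eqP => _; lia.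
Qed.

Lemma nonneg_H_DU A B : (forall t, 0 <= hgt (A ++ H :: B) t) ->
  (forall t, 0 <= hgt (A ++ D :: U :: B) t) <-> hend A != 0.
Proof.
move=> N; split=> [N'|nz t].
  by have := N' (width A).+1; rewrite hgt_after_prefix /=; have := N (width A);
     rewrite hgt_prefix => h1 h2; apply/eqP; lia.
have := hgt_DU_H A B t; have := N t; rewrite /bump.
case: (eqVneq t (width A).+1) => [->|_]; last by rewrite addr0 => N1 E; rewrite -E.
rewrite !hgt_after_prefix /= => _ _; have := N (width A); rewrite hgt_prefix.
by move: nz => /eqP; lia.
Qed.

Lemma nonneg_UD_H A B : (forall t, 0 <= hgt (A ++ U :: D :: B) t) ->
  forall t, 0 <= hgt (A ++ H :: B) t.
Proof.
move=> N t; have := hgt_H_UD A B t; rewrite /bump.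
case: (eqVneq t (width A).+1) => [->|_]; last by rewrite addr0 => <-.
rewrite !hgt_after_prefix /= addr0 => _.
by rewrite -(hgt_prefix A (U :: D :: B)); apply: N.
Qed.

Definition rewrite_at (a : step) (r w : spath) (i : nat) : spath :=
  if prefix [:: a] (drop i w) then take i w ++ r ++ drop i.+1 w
  else take i w ++ H :: drop i.+2 w.

Definition rewrites (a : step) (c : pred nat) (b1 b2 : step) (r w : spath) : seq spath :=
  [seq rewrite_at a r w i | i <- iota 0 (size w).+1 &
     (prefix [:: a] (drop i w) && c i) || prefix [:: b1; b2] (drop i w)].

Lemma rewrite_at_cat a r A B : rewrite_at a r (A ++ B) (size A) =
  A ++ (if prefix [:: a] B then r ++ drop 1 B else H :: drop 2 B).
Proof.
rewrite /rewrite_at drop_size_cat // take_size_cat //.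
have drop_after k : drop (size A + k) (A ++ B) = drop k B.
  by rewrite drop_cat ltnNge leq_addr /= addKn.
by rewrite -(drop_after 1) -(drop_after 2) addn1 addn2; case: ifP.
Qed.

Lemma drop_eq_cons (w : spath) i a s : drop i w = a :: s -> (i < size w)%N /\ nth H w i = a.
Proof.
move=> E; split; last by rewrite -[i]addn0 -nth_drop E.
by have := congr1 size E; rewrite size_drop /=; lia.
Qed.

Lemma uniq_first_change (T : eqType) (x0 : T) (w : seq T) (I : seq nat) (F : nat -> seq T) :
  uniq I -> {in I, forall i, nth x0 (F i) i != nth x0 w i} ->
  {in I &, forall i j, (i < j)%N -> nth x0 (F j) i = nth x0 w i} -> uniq (map F I).
Proof.
move=> uI Hi Hij; rewrite map_inj_in_uniq // => i j iI jI E.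
case: (ltngtP i j) => [lt|gt|//].
- by move: (Hi i iI); rewrite -(Hij i j iI jI lt) E eqxx.
- by move: (Hi j jI); rewrite -(Hij j i jI iI gt) E eqxx.
Qed.

Section Rewrites.

Variables (a b1 b2 : step) (c : pred nat).

(* each rewrite first differs from w at its own site, so they are distinct *)
Lemma uniq_rewrites h t w : h != a -> H != b1 ->
  uniq (rewrites a c b1 b2 (h :: t) w).
Proof.
move=> ha hb; rewrite /rewrites; apply: (@uniq_first_change _ H w).
- by rewrite filter_uniq // iota_uniq.
- move=> i; rewrite mem_filter => /andP [site _]; rewrite /rewrite_at.
  case: ifP site => [/prefixP [s /drop_eq_cons [Hi ->]] _
                   | _ /= /prefixP [s /drop_eq_cons [Hi ->]]];
    by rewrite nth_cat (size_takel (ltnW Hi)) ltnn subnn.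
- move=> i j _; rewrite mem_filter mem_iota => /andP [_ /andP [_ Hj]] lt.
  by rewrite /rewrite_at; case: ifP => _; rewrite nth_cat size_takel ?lt ?nth_take //; lia.
Qed.

Hypothesis ab : a != b1.

Lemma mem_rewrites r w y :
  y \in rewrites a c b1 b2 r w <->
  (exists A B, [/\ w = A ++ a :: B, c (size A) & y = A ++ r ++ B]) \/
  (exists A B, w = A ++ b1 :: b2 :: B /\ y = A ++ H :: B).
Proof.
split.
- case/mapP => i; rewrite mem_filter mem_iota => /andP [site /andP [_ iw]] ->.
  have Hi : (i <= size w)%N by lia.
  have := rewrite_at_cat a r (take i w) (drop i w).
  rewrite size_takel // cat_take_drop => ->.
  case Pa: (prefix [:: a] (drop i w)) site => /= site.
  + move/prefixP: Pa => [s /= E]; left; exists (take i w), s.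
    rewrite size_takel // -E cat_take_drop E /= drop0; split=> //.
    by move: site; rewrite E /= eq_sym (negPf ab) /= orbF.
  + move/prefixP: site => [s /= E]; right; exists (take i w), s.
    by rewrite -E cat_take_drop E /= drop0.
- case=> [[A [B [-> cA ->]]] | [A [B [-> ->]]]]; apply/mapP; exists (size A).
  + by rewrite mem_filter mem_iota drop_size_cat //= eqxx prefix0s cA size_cat /=; lia.
  + by rewrite rewrite_at_cat /= eqxx prefix0s drop0.
  + by rewrite mem_filter mem_iota drop_size_cat //= (negPf ab) !eqxx prefix0s size_cat /=; lia.
  + by rewrite rewrite_at_cat /= (negPf ab) drop0.
Qed.

(* a site cannot carry both patterns, so the sites are counted separately *)
Lemma size_rewrites r w :
  size (rewrites a c b1 b2 r w) =
  (count (fun i => prefix [:: a] (drop i w) && c i) (iota 0 (size w).+1) +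
   count (fun i => prefix [:: b1; b2] (drop i w)) (iota 0 (size w).+1))%N.
Proof.
rewrite size_map size_filter -count_predUI.
rewrite [X in (_ + X)%N](eq_count (a2 := pred0)) ?count_pred0 ?addn0 // => i /=.
apply/negP => /andP [/andP [/prefixP [s E] _] /prefixP [s' E']].
by move: E'; rewrite E => [[E2]]; move: ab; rewrite E2 eqxx.
Qed.

End Rewrites.

(* Counting covers *)

Definition raises (g : spath) : seq spath := rewrites H predT D U [:: U; D] g.
Definition lowerings (c : pred nat) (g : spath) : seq spath := rewrites H c U D [:: D; U] g.

Lemma size_filter_mem (T : eqType) (P M : seq T) (f : pred T) : uniq P -> uniq M ->
  {subset M <= P} -> {in P, forall y, f y = (y \in M)} -> size (filter f P) = size M.
Proof.
move=> uP uM sub Hf; rewrite (eq_in_filter Hf); apply: perm_size.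
apply: uniq_perm; [exact: filter_uniq | exact: uM |] => y.
by rewrite mem_filter; case: (boolP (y \in M)) => //= /sub.
Qed.

Lemma mem_raises g y : y \in raises g <-> raise g y.
Proof.
rewrite mem_rewrites //; split.
- by case=> [[A [B [E _ ->]]]|[A [B [E ->]]]]; [left|right]; exists A, B.
- by case=> [[A [B [E ->]]]|[A [B [E ->]]]]; [left|right]; exists A, B.
Qed.

(* in a family closed under raises, the upper covers of g are its raises *)
Lemma size_Delta n P g : raise_closed n P -> uniq P -> g \in P ->
  size (Delta n P g) = (omega [:: H] g + omega [:: D; U] g)%N.
Proof.
move=> PR uP gP; rewrite (@size_filter_mem _ _ (raises g)) ?uniq_rewrites //.
- by rewrite size_rewrites //; congr (_ + _)%N; apply: eq_count => i; rewrite andbT.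
- by move=> y /mem_raises; apply: (proj2 PR).
- move=> y yP; apply/idP/idP.
  + by move/(covers_iff_raise PR gP yP)/mem_raises.
  + by move/mem_raises/(covers_iff_raise PR gP yP).
Qed.

Lemma size_Nabla n P c g : raise_closed n P -> uniq P -> g \in P ->
  {subset lowerings c g <= P} -> (forall y, y \in P -> y \in lowerings c g <-> raise y g) ->
  size (Nabla n P g) =
  (count (fun i => prefix [:: H] (drop i g) && c i) (iota 0 (size g).+1) + omega [:: U; D] g)%N.
Proof.
move=> PR uP gP sub Hmem; rewrite -(@size_rewrites H U D c isT [:: D; U] g).
apply: size_filter_mem; rewrite ?uniq_rewrites // => y yP.
apply/idP/idP.
- by move/(covers_iff_raise PR yP gP)/(Hmem y yP).
- by move/(Hmem y yP)/(covers_iff_raise PR yP gP).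
Qed.

Lemma mem_lowerings_all g y : y \in lowerings predT g <-> raise y g.
Proof.
rewrite mem_rewrites //; split.
- by case=> [[A [B [E _ ->]]]|[A [B [E ->]]]]; [right|left]; exists A, B.
- by case=> [[A [B [-> E]]]|[A [B [-> E]]]]; [right|left]; exists A, B.
Qed.

(* in GS_n every H and UD factor can be lowered *)
Lemma size_Nabla_GSn n g : grand n g ->
  size (Nabla n (GSn n) g) = (omega [:: H] g + omega [:: U; D] g)%N.
Proof.
move=> G; rewrite (@size_Nabla _ _ predT) ?undup_uniq ?mem_GSn //.
- by congr (_ + _)%N; apply: eq_count => i; rewrite andbT.
- exact: raise_closed_GSn.
- by move=> y /mem_lowerings_all R; rewrite mem_GSn -(raise_grand _ R).
- by move=> y _; apply: mem_lowerings_all.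
Qed.

Definition off_axis (g : spath) : pred nat := fun i => hend (take i g) != 0.

Lemma count_off_axis g :
  count (fun i => prefix [:: H] (drop i g) && off_axis g i) (iota 0 (size g).+1) = omegaHstar g.
Proof.
rewrite /omegaHstar -addn1 iotaD count_cat /= drop_size /= !addn0.
apply: eq_in_count => i; rewrite mem_iota => /andP [_ Hi].
by rewrite (drop_nth U) //= prefix0s andbT.
Qed.

Lemma lowerings_off_axis_Sn n g : schroder n g -> {subset lowerings (off_axis g) g <= Sn n}.
Proof.
move=> /schroderP [G N] y; rewrite mem_rewrites // mem_Sn.
case=> [[A [B [E nz ->]]]|[A [B [E ->]]]]; apply/schroderP; split.
- have R : raise (A ++ [:: D; U] ++ B) g by right; exists A, B.
  by rewrite -(raise_grand n R).
- have NH : forall t, 0 <= hgt (A ++ H :: B) t by rewrite -E.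
  by rewrite /off_axis E take_size_cat // in nz; apply/(nonneg_H_DU NH).
- have R : raise (A ++ H :: B) g by left; exists A, B.
  by rewrite -(raise_grand n R).
- by apply: nonneg_UD_H; rewrite -E.
Qed.

Lemma mem_lowerings_off_axis n g y : schroder n g -> schroder n y ->
  y \in lowerings (off_axis g) g <-> raise y g.
Proof.
move=> /schroderP [_ N] /schroderP [_ Ny]; rewrite mem_rewrites //; split.
- by case=> [[A [B [E _ ->]]]|[A [B [E ->]]]]; [right|left]; exists A, B.
- case=> [[A [B [-> E]]]|[A [B [Ey E]]]]; first by right; exists A, B.
  left; exists A, B; split=> //; rewrite /off_axis E take_size_cat //.
  have NH : forall t, 0 <= hgt (A ++ H :: B) t by rewrite -E.
  by apply/(nonneg_H_DU NH); rewrite -Ey.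
Qed.

(* in S_n the H steps on the x-axis cannot be lowered *)
Lemma size_Nabla_Sn n g : schroder n g ->
  size (Nabla n (Sn n) g) = (omegaHstar g + omega [:: U; D] g)%N.
Proof.
move=> S; rewrite (@size_Nabla _ _ (off_axis g)) ?count_off_axis ?undup_uniq ?mem_Sn //.
- exact: raise_closed_Sn.
- exact: lowerings_off_axis_Sn.
- by move=> y; rewrite mem_Sn; apply: mem_lowerings_off_axis.
Qed.

Theorem mainTheorem11 (n : nat) :
  (forall g : spath, schroder n g ->
     size (Delta n (Sn n) g) = (omega [:: H] g + omega [:: D; U] g)%N /\
     size (Nabla n (Sn n) g) = (omegaHstar g + omega [:: U; D] g)%N) /\
  (forall g : spath, grand n g ->
     size (Delta n (GSn n) g) = (omega [:: H] g + omega [:: D; U] g)%N /\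
     size (Nabla n (GSn n) g) = (omega [:: H] g + omega [:: U; D] g)%N).
Proof.
split=> g Hg; split.
- by apply: size_Delta; rewrite ?undup_uniq ?mem_Sn //; apply: raise_closed_Sn.
- exact: size_Nabla_Sn.
- by apply: size_Delta; rewrite ?undup_uniq ?mem_GSn //; apply: raise_closed_GSn.
- exact: size_Nabla_GSn.
Qed.
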